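(* Let $m>6C^2(C+1)$ and $l_m=\lfloor\frac{m-2}{C+1}\rfloor$. Let $F_m(\mathbf x)=\sum_{i=1}^n a_iP_m(x_i)$ be a node of the escalator tree of $m$-gonal forms with $n\ge (C-4)l_m+5$ and $a_3=a_4=\cdots=a_{(C-4)l_m+5}=3$. (1) If $a_1+a_2+\cdots+a_n\ge 3(m-3)-1$ and $a_i\equiv0\pmod 3$ for all $3\le i\le n$, then $F_m(\mathbf x)$ is universal (hence a leaf). (2) If $a_n\not\equiv 0\pmod 3$, then $F_m(\mathbf x)$ is universal (hence a leaf).
   Context: For an integer $m\ge 3$ and $x\in\mathbb Z$ put $P_m(x)=\frac{m-2}{2}x^2-\frac{m-4}{2}x$. An $m$-gonal form of rank $n$ is $a_1P_m(x_1)+\cdots+a_nP_m(x_n)$ with positive integers $a_1\le\cdots\le a_n$ and $x_i\in\mathbb Z$; it represents $N$ if $N$ is a value at some integer vector, and is universal if it represents every positive integer. The truant of a non-universal form is the smallest positive integer it does not represent (the empty form has truant $1$). The escalator tree of $m$-gonal forms is the rooted tree whose root is the empty form; a universal node is a leaf, and a non-universal node $\sum_{i=1}^k a_iP_m(x_i)$ has as children exactly all forms $\sum_{i=1}^{k+1}a_iP_m(x_i)$ with $a_{k+1}\ge a_k$ (any $a_1\ge1$ if $k=0$) that represent the truant of the node. Standing assumption: $C$ is a fixed absolute constant such that for every $m\ge3$, every $m$-gonal form that represents every positive integer in $[1,C(m-2)]$ is universal. *)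

From mathcomp Require Import all_boot all_order all_algebra.
From mathcomp Require Import intdiv.
Set Implicit Arguments. Unset Strict Implicit. Unset Printing Implicit Defensive.
Import Order.TTheory GRing.Theory Num.Theory.
Local Open Scope ring_scope.

(* P_m(x) = ((m-2) x^2 - (m-4) x) / 2, an integer for every integer x. *)
Definition Pm (m : nat) (x : int) : int :=
  (((m%:Z - 2) * x ^+ 2 - (m%:Z - 4) * x) %/ 2)%Z.

(* An m-gonal form is given by its coefficient list a = [:: a_1; ...; a_n]
   (a_i = a`_(i-1)). *)
Definition value (m : nat) (a : seq nat) (x : nat -> int) : int :=
  \sum_(i < size a) (nth 0%N a i)%:Z * Pm m (x i).

Definition represents (m : nat) (a : seq nat) (N : nat) : Prop :=
  exists x : nat -> int, value m a x = N%:Z.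

Definition universal (m : nat) (a : seq nat) : Prop :=
  forall N : nat, (0 < N)%N -> represents m a N.

Definition is_form (a : seq nat) : Prop :=
  all (fun c => 0 < c)%N a /\ sorted leq a.

Definition is_truant (m : nat) (a : seq nat) (t : nat) : Prop :=
  [/\ (0 < t)%N, ~ represents m a t &
      forall k : nat, (0 < k < t)%N -> represents m a k].

Inductive escalator_node (m : nat) : seq nat -> Prop :=
| esc_root : escalator_node m [::]
| esc_child : forall (a : seq nat) (b t : nat),
    escalator_node m a ->
    ~ universal m a ->
    is_truant m a t ->
    (if a is [::] then (1 <= b)%N else (last 0%N a <= b)%N) ->
    represents m (rcons a b) t ->
    escalator_node m (rcons a b).

From mathcomp Require Import all_boot all_order all_algebra intdiv.
From mathcomp Require Import zify ring.
Import Order.TTheory GRing.Theory Num.Theory.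
Local Open Scope ring_scope.

(* Put l = l_m and k = (C-4) l + 5, so that a_3 = ... = a_k = 3 is a block of
   k - 2 threes (0-based positions 2 <= i < k).  The proof rests on:
   - a shift argument: if a form with such a block, k - 2 >= 4C, represents
     every v < 3(m-3), then it represents every N <= C(m-2).  Write
     N = q 3(m-3) + v; in a representation of v each block term P_m(x_i) is
     0 or 1, and refilling the block with q copies of P_m(-1) = m-3 (or of
     P_m(2) = m, trading three 1's for each) adds exactly q 3(m-3).  By the
     standing assumption such a form is universal;
   - part (1): a node represents every integer up to the sum of its
     coefficients, in particular every v < 3(m-3);
   - part (2): the parent F' of F has a_1 = 1, a_2 in {1, 2} and the whole
     block, so P_m(x_1) + a_2 P_m(x_2) + 3 (sum of 0/1's) gives every
     v < 3(m-3) except one residue class mod 3 above 3(k-2).  Such a v is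
     below the truant of F', or v - a_n is outside that class.
   The standing assumption also forces C >= 15 (a pentagonal form represents
   1, ..., 42 but not 43), which the numerical bounds on k need. *)

Lemma Pm_double m x : Pm m x * 2 = (m%:Z - 2) * (x * x) - (m%:Z - 4) * x.
Proof.
rewrite /Pm -expr2.
have [y [r [hx hr]]] : exists y r, x = y * 2 + r /\ (r = 0 \/ r = 1).
  exists (x %/ 2)%Z, (x %% 2)%Z; split; first exact: divz_eq.
  have := modz_ge0 x (isT : 2 != 0 :> int); have := ltz_pmod x (isT : 0 < 2 :> int); lia.
rewrite {}hx; case: hr => ->.
- rewrite [X in (X %/ 2)%Z](_ : _ = ((m%:Z - 2) * (2 * y ^+ 2) - (m%:Z - 4) * y) * 2);
    last by ring.
  by rewrite mulzK //; ring.
- rewrite [X in (X %/ 2)%Z](_ : _ =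
      ((m%:Z - 2) * (2 * y ^+ 2 + 2 * y) - (m%:Z - 4) * y + 1) * 2); last by ring.
  by rewrite mulzK //; ring.
Qed.

Lemma Pm_0 m : Pm m 0 = 0.
Proof. by have := Pm_double m 0; lia. Qed.

Lemma Pm_1 m : Pm m 1 = 1.
Proof. by have := Pm_double m 1; lia. Qed.

Lemma Pm_N1 m : Pm m (-1) = m%:Z - 3.
Proof. by have := Pm_double m (-1); lia. Qed.

Lemma Pm_2 m : Pm m 2 = m%:Z.
Proof. by have := Pm_double m 2; lia. Qed.

Lemma Pm_ge0 m x : (4 <= m)%N -> 0 <= Pm m x.
Proof.
move=> hm; have := Pm_double m x; have hm' : 4 <= m%:Z by lia.
have [hx|hx] : x <= 0 \/ 1 <= x by lia.
- have : 0 <= x * ((m%:Z - 2) * x - (m%:Z - 4)) by apply: mulr_le0 => //; nia.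
  nia.
- have : 0 <= x * ((m%:Z - 2) * (x - 1)) by apply: mulr_ge0; [lia | nia].
  nia.
Qed.

Lemma Pm_ge_m3 m x : (4 <= m)%N -> x <= -1 \/ 2 <= x -> m%:Z - 3 <= Pm m x.
Proof.
move=> hm hx; have := Pm_double m x; have hm' : 4 <= m%:Z by lia.
case: hx => hx.
- have : 0 <= (- x - 1) * ((m%:Z - 2) * (- x) + (m%:Z - 4) + (m%:Z - 2)).
    by apply: mulr_ge0; [lia | nia].
  nia.
- have : 0 <= (x - 2) * ((m%:Z - 2) * x + (m%:Z - 2) * 2 - (m%:Z - 4)).
    by apply: mulr_ge0; [lia | nia].
  nia.
Qed.

Lemma Pm_le1 m x : (4 <= m)%N -> Pm m x < m%:Z - 3 -> Pm m x <= 1.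
Proof.
move=> hm hlt.
have [hx|[->|->]] : (x <= -1 \/ 2 <= x) \/ x = 0 \/ x = 1 by lia.
- by have := Pm_ge_m3 m x hm hx; lia.
- by rewrite Pm_0.
- by rewrite Pm_1.
Qed.

Lemma value_ge0 m a x : (4 <= m)%N -> 0 <= value m a x.
Proof.
by move=> hm; apply: sumr_ge0 => i _; apply: mulr_ge0 => //; apply: Pm_ge0.
Qed.

Lemma value_ext m a x y : (forall i, (i < size a)%N -> x i = y i) ->
  value m a x = value m a y.
Proof. by move=> exy; apply: eq_bigr => i _; rewrite exy. Qed.

Lemma value_rcons m a b x :
  value m (rcons a b) x = value m a x + b%:Z * Pm m (x (size a)).
Proof.
rewrite /value size_rcons big_ord_recr /= nth_rcons ltnn eqxx; congr (_ + _).
by apply: eq_bigr => i _; rewrite nth_rcons ltn_ord.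
Qed.

(* Since P_m(0) = 0, the value is additive on assignments with disjoint supports. *)
Lemma value_add_disjoint m a x y : (forall i, x i = 0 \/ y i = 0) ->
  value m a (fun i => x i + y i) = value m a x + value m a y.
Proof.
move=> disj; rewrite /value -big_split /=; apply: eq_bigr => i _.
by case: (disj i) => ->; rewrite ?add0r ?addr0 Pm_0 mulr0 ?add0r ?addr0.
Qed.

Lemma value_point m a j y : (j < size a)%N ->
  value m a (fun i => if i == j then y else 0) = (nth 0%N a j)%:Z * Pm m y.
Proof.
move=> hj; rewrite /value (bigD1 (Ordinal hj)) //= eqxx big1 ?addr0 // => i.
by rewrite -val_eqE /= => /negbTE ->; rewrite Pm_0 mulr0.
Qed.

Lemma represents_0 m a : represents m a 0.
Proof. by exists (fun=> 0); apply: big1 => i _; rewrite Pm_0 mulr0. Qed.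

Lemma represents_rcons m a b N : represents m a N -> represents m (rcons a b) N.
Proof.
case=> x hx; exists (fun i => if i == size a then 0 else x i).
rewrite value_rcons eqxx Pm_0 mulr0 addr0 -hx; apply: value_ext => i hi.
by rewrite ltn_eqF.
Qed.

Lemma represents_rcons_add m a b N :
  represents m a N -> represents m (rcons a b) (N + b).
Proof.
case=> x hx; exists (fun i => if i == size a then 1 else x i).
rewrite value_rcons eqxx Pm_1 mulr1 PoszD -hx; congr (_ + _).
by apply: value_ext => i hi; rewrite ltn_eqF.
Qed.

Lemma node_is_form m a : escalator_node m a -> is_form a.
Proof.
elim=> {a} [|a b t _ [hpos hsort] _ _ hle _]; first by [].
case: a hpos hsort hle => [|c a] hpos hsort hle; first by rewrite /is_form /= hle.
split.
- by rewrite all_rcons hpos andbT (leq_trans (allP hpos _ (mem_last c a)) hle).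
- by move: hsort; rewrite /= rcons_path => ->.
Qed.

Lemma coef_le_truant m a b t : (4 <= m)%N -> ~ represents m a t ->
  represents m (rcons a b) t -> (b <= t)%N.
Proof.
move=> hm hnot [x]; rewrite value_rcons => hx.
have hval := value_ge0 m a x hm; have hP := Pm_ge0 m (x (size a)) hm.
have [hP0|hP1] : Pm m (x (size a)) = 0 \/ 1 <= Pm m (x (size a)) by lia.
- by case: hnot; exists x; rewrite -hx hP0 mulr0 addr0.
- have : b%:Z <= b%:Z * Pm m (x (size a)) by nia.
  lia.
Qed.

(* A node represents every integer up to the sum of its coefficients: adding
   the coefficient b at the truant t fills [1, sum + b] since b <= t. *)
Lemma node_represents_le_sum m a N : (4 <= m)%N -> escalator_node m a ->
  (N <= \sum_(c <- a) c)%N -> represents m a N.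
Proof.
move=> hm hnode; elim: hnode N => {a} [|a b t _ IH _ [_ hnt hbelow] _ hrep] N.
  by rewrite big_nil leqn0 => /eqP ->; apply: represents_0.
rewrite big_rcons /= => hN.
have hbt := coef_le_truant m a b t hm hnt hrep.
have [hle|hgt] := leqP N (\sum_(c <- a) c).
  by apply/represents_rcons/IH.
have [hbN|hNb] := leqP b N.
  by rewrite -(subnK hbN); apply/represents_rcons_add/IH; lia.
by apply/represents_rcons/hbelow; lia.
Qed.

Lemma truant_unique m a t t' : is_truant m a t -> is_truant m a t' -> t = t'.
Proof.
case=> ht0 hnt hbelow [ht'0 hnt' hbelow'].
have [hlt|hgt|//] := ltngtP t t'.
- by case: hnt; apply: hbelow'; rewrite ht0 hlt.
- by case: hnt'; apply: hbelow; rewrite ht'0 hgt.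
Qed.

(* The truant of the empty form is 1, and that of P_m(x) is 2 (as m - 3 > 2). *)
Lemma truant_nil m : is_truant m [::] 1.
Proof.
split=> // [[x]|k /andP[k0 k1]]; first by rewrite /value big_ord0.
by move: k1; rewrite ltnS leqNgt k0.
Qed.

Lemma truant_one m : (7 <= m)%N -> is_truant m [:: 1%N] 2.
Proof.
move=> hm; have value1 x : value m [:: 1%N] x = Pm m (x 0%N).
  by rewrite /value big_ord_recr big_ord0 /= add0r mul1r.
split=> // [[x]|k /andP[k0 k1]].
  rewrite value1 => hx; have := Pm_le1 m (x 0%N) ltac:(lia); rewrite hx; lia.
have -> : k = 1%N by lia.
by exists (fun=> 1); rewrite value1 Pm_1.
Qed.

Lemma node_first_coefs m a : (7 <= m)%N -> escalator_node m a ->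
  ((0 < size a)%N -> nth 0%N a 0 = 1%N) /\ ((1 < size a)%N -> (nth 0%N a 1 <= 2)%N).
Proof.
move=> hm; elim=> {a} [|a b t hnode [IH0 IH1] _ ht hb1 hrep]; first by [].
have hbt : (b <= t)%N by case: ht => _ hnt _; apply: (coef_le_truant m a b t _ hnt hrep); lia.
case: a hnode IH0 IH1 ht hb1 hbt {hrep} => [|c [|d a]] _ IH0 IH1 ht hb1 hbt /=.
- by rewrite (truant_unique m [::] t 1 ht (truant_nil m)) in hbt; split=> // _; lia.
- have hc : c = 1%N by apply: IH0.
  rewrite hc in ht *; rewrite (truant_unique m [:: 1%N] t 2 ht (truant_one m hm)) in hbt.
  by split.
- by split=> _; [apply: IH0 | apply: IH1].
Qed.

Lemma node_parent m a b : escalator_node m (rcons a b) ->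
  [/\ escalator_node m a, ~ universal m a &
      exists2 t, is_truant m a t & represents m (rcons a b) t].
Proof.
move eq_ab : (rcons a b) => s hs; case: hs eq_ab => [|a0 b0 t hn hnu ht _ hr].
  by case: a.
by move=> /rcons_inj [-> _]; split => //; exists t.
Qed.

Definition on_block (k : nat) (z : nat -> int) (i : nat) : int :=
  if (2 <= i < k)%N then z i else 0.

Definition off_block (k : nat) (x : nat -> int) (i : nat) : int :=
  if (2 <= i < k)%N then 0 else x i.

Definition filler (q e : nat) (y0 : int) (i : nat) : int :=
  if (i < q + 2)%N then y0 else if (i < q + e + 2)%N then 1 else 0.

Lemma sum_filler m k q e y0 : (2 <= k)%N -> (q + e <= k - 2)%N ->
  \sum_(2 <= i < k) Pm m (filler q e y0 i) = q%:Z * Pm m y0 + e%:Z.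
Proof.
move=> hk hqe.
rewrite (@big_cat_nat _ _ _ (q + 2)) /=; [|lia|lia].
rewrite (@big_cat_nat _ _ _ (q + e + 2) (q + 2) k) /=; [|lia|lia].
rewrite (eq_big_nat _ _ (F2 := fun=> Pm m y0)); last first.
  by move=> i /andP[_ hi]; rewrite /filler hi.
rewrite [X in _ + (X + _)](eq_big_nat _ _ (F2 := fun=> 1)); last first.
  by move=> i /andP[h1 h2]; rewrite /filler ltnNge h1 h2 /= Pm_1.
rewrite [X in _ + (_ + X)]big1_seq; last first.
  move=> i /andP[_]; rewrite mem_index_iota => /andP[hi _]; rewrite /filler.
  have [-> ->] : (i < q + 2)%N = false /\ (i < q + e + 2)%N = false by lia.
  exact: Pm_0.
rewrite !sumr_const_nat addr0 addnK (_ : (q + e + 2 - (q + 2) = e)%N); last by lia.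
by rewrite -mulr_natl !natz.
Qed.

Lemma ler_sum_term (F : nat -> int) lo hi i : (lo <= i < hi)%N ->
  (forall j, 0 <= F j) -> F i <= \sum_(lo <= j < hi) F j.
Proof.
move=> hi' F0; rewrite (bigD1_seq i) ?iota_uniq ?mem_index_iota //=.
by rewrite lerDl; apply: sumr_ge0 => j _.
Qed.

Definition first_two_value (m a2 r : nat) : Prop :=
  exists x1 x2 : int, r%:Z = Pm m x1 + a2%:Z * Pm m x2.

Lemma first_two_small m a2 r : (1 <= a2 <= 2)%N -> (r < 3)%N -> first_two_value m a2 r.
Proof.
move=> ha2 hr; have [->|[->|->]] : (r = 0 \/ r = 1 \/ r = 2)%N by lia.
- by exists 0, 0; rewrite Pm_0 mulr0.
- by exists 1, 0; rewrite Pm_1 Pm_0 mulr0.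
- have [->|->] : (a2 = 1 \/ a2 = 2)%N by lia.
  + by exists 1, 1; rewrite Pm_1 mulr1.
  + by exists 0, 1; rewrite Pm_0 Pm_1 mulr1.
Qed.

(* ... and, between m - 3 and 2m - 5, every residue mod 3 except possibly one:
   for a_2 = 1 the values m-3, m-2, 2m-6 miss the class of m+2 unless
   m = 2 (mod 3); for a_2 = 2 the values m-3, m-1, 2m-6, 2m-5 miss the class
   of 0 exactly when m = 2 (mod 3). *)
Definition exceptional (m a2 v : nat) : bool :=
  ((a2 == 1) && (m %% 3 != 2) && (v %% 3 == (m + 2) %% 3) ||
   (a2 == 2) && (m %% 3 == 2) && (v %% 3 == 0))%N.

Lemma first_two_mid m a2 v : (4 <= m)%N -> (1 <= a2 <= 2)%N -> ~~ exceptional m a2 v ->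
  exists2 r, first_two_value m a2 r & (m - 3 <= r <= 2 * m - 5)%N /\ (r = v %[mod 3])%N.
Proof.
move=> hm ha2 hexc.
have witness x1 x2 r : r%:Z = Pm m x1 + a2%:Z * Pm m x2 ->
    (m - 3 <= r <= 2 * m - 5)%N /\ (r = v %[mod 3])%N ->
    exists2 r, first_two_value m a2 r & (m - 3 <= r <= 2 * m - 5)%N /\ (r = v %[mod 3])%N.
  by move=> hr hrange; exists r => //; exists x1, x2.
(* (v + 2m) mod 3 is the residue of v - m. *)
have [hv0|[hv1|hv2]] :
  ((v + 2 * m) %% 3 = 0 \/ (v + 2 * m) %% 3 = 1 \/ (v + 2 * m) %% 3 = 2)%N by lia.
- by apply: (witness (-1) 0 (m - 3)%N); rewrite ?Pm_N1 ?Pm_0; lia.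
- have [e1|e2] : (a2 = 1 \/ a2 = 2)%N by lia.
  + by apply: (witness (-1) 1 (m - 2)%N); rewrite ?Pm_N1 ?Pm_1; lia.
  + have [m0|m1] : (m %% 3 = 0 \/ m %% 3 = 1)%N by move: hexc; rewrite /exceptional; lia.
    * by apply: (witness 1 (-1) (2 * m - 5)%N); rewrite ?Pm_N1 ?Pm_1; lia.
    * by apply: (witness 0 (-1) (2 * m - 6)%N); rewrite ?Pm_N1 ?Pm_0; lia.
- have [e1|e2] : (a2 = 1 \/ a2 = 2)%N by lia.
  + have m2 : (m %% 3 = 2)%N by move: hexc; rewrite /exceptional; lia.
    by apply: (witness (-1) (-1) (2 * m - 6)%N); rewrite ?Pm_N1; lia.
  + by apply: (witness (-1) 1 (m - 1)%N); rewrite ?Pm_N1 ?Pm_1; lia.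
Qed.

Section ThreesBlock.
Variables (m : nat) (a : seq nat) (k : nat).
Hypotheses (hk : (2 <= k <= size a)%N)
  (threes : forall i, (2 <= i < k)%N -> nth 0%N a i = 3%N).

Lemma value_on_block z :
  value m a (on_block k z) = 3 * \sum_(2 <= i < k) Pm m (z i).
Proof.
have hka : (k <= size a)%N by case/andP: hk.
rewrite mulr_sumr (eq_big_nat _ _ (F2 := fun i => (nth 0%N a i)%:Z * Pm m (on_block k z i))); last first.
  by move=> i hi; rewrite threes // /on_block hi.
rewrite (big_nat_widen _ _ _ _ _ hka) (big_nat_widenl _ _ _ _ _ (leq0n 2)) big_mkcond.
rewrite /value -(big_mkord xpredT (fun i => (nth 0%N a i)%:Z * Pm m (on_block k z i))).
apply: eq_big_nat => i _.
rewrite /on_block andTb andbC; case: ifP => // _.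
by rewrite Pm_0 mulr0.
Qed.

Lemma value_off_on x z : value m a (fun i => off_block k x i + on_block k z i) =
  value m a (off_block k x) + 3 * \sum_(2 <= i < k) Pm m (z i).
Proof.
rewrite value_add_disjoint ?value_on_block // => i.
by rewrite /off_block /on_block; case: ifP; [left | right].
Qed.

Lemma value_split_block x :
  value m a x = value m a (off_block k x) + 3 * \sum_(2 <= i < k) Pm m (x i).
Proof.
rewrite -value_off_on; apply: value_ext => i _.
by rewrite /off_block /on_block; case: ifP; rewrite ?add0r ?addr0.
Qed.

(* In a representation of some v < 3(m-3) each block term satisfies
   3 P_m(x_i) <= v < 3(m-3), so it is 0 or 1: the block sum is a number
   of ones, at most k - 2. *)
Lemma block_sum_small x : (4 <= m)%N -> value m a x < 3 * (m%:Z - 3) ->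
  exists2 e : nat, \sum_(2 <= i < k) Pm m (x i) = e%:Z & (e <= k - 2)%N.
Proof.
move=> hm hx; set S := \sum_(2 <= i < k) Pm m (x i).
have hS : 3 * S <= value m a x.
  by rewrite (value_split_block x) lerDr value_ge0.
have le1 i : (2 <= i < k)%N -> Pm m (x i) <= 1.
  move=> hi; apply: Pm_le1 => //.
  have := ler_sum_term (fun j => Pm m (x j)) 2 k i hi (fun j => Pm_ge0 m (x j) hm); lia.
have hS0 : 0 <= S by apply: sumr_ge0 => i _; apply: Pm_ge0.
exists `|S|%N; first by rewrite gez0_abs.
have : S <= \sum_(2 <= i < k) (1 : int) by apply: ler_sum_nat.
rewrite sumr_const_nat -[S]gez0_abs //; lia.
Qed.

(* The shift: from a representation of v < 3(m-3), refill the block with q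
   copies of -1 (each adding 3(m-3)) keeping the ones; if there is no room,
   use q copies of 2 instead, which add 3m = 3(m-3) + 9 each, and drop 3q ones. *)
Lemma represents_add_multiple q v : (4 <= m)%N -> (4 * q <= k - 2)%N ->
  (v < 3 * (m - 3))%N -> represents m a v ->
  represents m a (q * (3 * (m - 3)) + v).
Proof.
move=> hm hq hv [x hx].
have hk2 : (2 <= k)%N by case/andP: hk.
have [e hS he] := block_sum_small x hm ltac:(rewrite hx; lia).
have := value_split_block x; rewrite hS hx => hsplit.
have [hfit|hover] := leqP (q + e) (k - 2).
- exists (fun i => off_block k x i + on_block k (filler q e (-1)) i).
  rewrite value_off_on sum_filler // Pm_N1; lia.
- exists (fun i => off_block k x i + on_block k (filler q (e - 3 * q) 2) i).
  rewrite value_off_on sum_filler ?Pm_2; lia.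
Qed.

Lemma represents_upto C : (4 <= m)%N -> (4 * C <= k - 2)%N ->
  (forall v, (v < 3 * (m - 3))%N -> represents m a v) ->
  forall N, (N <= C * (m - 2))%N -> represents m a N.
Proof.
move=> hm hC hsmall N hN; set d := (3 * (m - 3))%N.
have hd : (0 < d)%N by rewrite /d; lia.
have hq : (N %/ d < C.+1)%N by rewrite ltn_divLR //; rewrite /d; nia.
rewrite (divn_eq N d); apply: represents_add_multiple; rewrite ?ltn_pmod //; first lia.
by apply: hsmall; rewrite ltn_pmod.
Qed.

Hypotheses (head1 : nth 0%N a 0 = 1%N) (head2 : (1 <= nth 0%N a 1 <= 2)%N).

Lemma represents_first_two r e : first_two_value m (nth 0%N a 1) r ->
  (e <= k - 2)%N -> represents m a (r + 3 * e).
Proof.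
move=> [x1 [x2 hr]] he; have [hk2 hka] := andP hk.
exists (fun i => (if i == 0%N then x1 else 0) +
                 ((if i == 1%N then x2 else 0) + on_block k (filler 0 e 0) i)).
rewrite !value_add_disjoint ?value_point ?value_on_block ?sum_filler //; first last.
- by case=> [|[|i]]; rewrite /on_block /=; [right | left | left].
- by case=> [|[|i]]; rewrite /on_block /=; [left | right | left].
- by lia.
- by lia.
by rewrite head1 Pm_0 mulr0 add0r mul1r PoszD hr; lia.
Qed.

Lemma represents_nonexceptional v : (4 <= m)%N -> (2 * m + 10 <= 3 * (k - 2))%N ->
  (v <= 3 * m - 10)%N -> (v <= 3 * (k - 2))%N || ~~ exceptional m (nth 0%N a 1) v ->
  represents m a v.
Proof.
move=> hm hlong hv hcase; have [hsmall|hlarge] := leqP v (3 * (k - 2)).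
  rewrite (divn_eq v 3) addnC mulnC; apply: represents_first_two; last by lia.
  by apply: first_two_small; rewrite ?ltn_pmod.
have hexc : ~~ exceptional m (nth 0%N a 1) v by rewrite leqNgt hlarge in hcase.
have [r hr [hrange hmod]] := first_two_mid m (nth 0%N a 1) v hm head2 hexc.
have -> : v = (r + 3 * ((v - r) %/ 3))%N by lia.
by apply: (represents_first_two r _ hr); lia.
Qed.

End ThreesBlock.

Definition universality_criterion (C : nat) : Prop :=
  forall m : nat, (3 <= m)%N -> forall a : seq nat, is_form a ->
    (forall N : nat, (1 <= N <= C * (m - 2))%N -> represents m a N) -> universal m a.

(* The standing assumption forces C >= 15: the pentagonal form
   P_5(x) + P_5(y) + 11 P_5(z) represents 1, ..., 42 but not 43. *)
Definition small_pentagonals : seq (nat * int) :=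
  [:: (0%N, 0); (1%N, 1); (2%N, -1); (5%N, 2); (7%N, -2); (12%N, 3); (15%N, -3);
      (22%N, 4); (26%N, -4); (35%N, 5); (40%N, -5)].

Lemma small_pentagonalsP p : p \in small_pentagonals -> Pm 5 p.2 = p.1%:Z.
Proof.
have table_ok : all (fun p => Pm 5 p.2 == p.1%:Z) small_pentagonals by vm_compute.
by move=> hp; apply/eqP; apply: (allP table_ok).
Qed.

Lemma small_pentagonals_complete x : Pm 5 x <= 43 ->
  exists2 p, p \in small_pentagonals & Pm 5 x = p.1%:Z.
Proof.
move=> hx; have h2 := Pm_double 5 x.
have hrange : -5 <= x <= 5 by apply/andP; split; nia.
suff /hasP[p hp /eqP ->] : has (fun p => x == p.2) small_pentagonals.
  by exists p => //; apply: small_pentagonalsP.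
case: x hrange {hx h2} => n.
- move=> /andP[_ h]; have : (n <= 5)%N by lia.
  by case: n h => [|[|[|[|[|[|n]]]]]].
- move=> /andP[h _]; have : (n <= 4)%N by move: h; rewrite NegzE; lia.
  by case: n h => [|[|[|[|[|n]]]]].
Qed.

Definition pentagonal_witness : seq nat := [:: 1%N; 1%N; 11%N].

Lemma value_pentagonal_witness x : value 5 pentagonal_witness x =
  Pm 5 (x 0%N) + Pm 5 (x 1%N) + 11 * Pm 5 (x 2%N).
Proof. by rewrite /value !big_ord_recr big_ord0 /= add0r !mul1r. Qed.

Lemma pentagonal_witness_represents N : (1 <= N <= 42)%N ->
  represents 5 pentagonal_witness N.
Proof.
move=> hN.
have all_found : all (fun N => has (fun p1 => has (fun p2 => has (fun p3 =>
    p1.1 + p2.1 + 11 * p3.1 == N)%N small_pentagonals) small_pentagonals)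
    small_pentagonals) (iota 1 42) by vm_compute.
have /hasP[p1 h1 /hasP[p2 h2 /hasP[p3 h3 /eqP hs]]] :=
  allP all_found N ltac:(rewrite mem_iota; lia).
exists (fun i => if i == 0%N then p1.2 else if i == 1%N then p2.2 else p3.2).
rewrite value_pentagonal_witness /= !small_pentagonalsP // -hs.
by move: (p1.1) (p2.1) (p3.1) => n1 n2 n3; lia.
Qed.

Lemma pentagonal_witness_misses_43 : ~ represents 5 pentagonal_witness 43.
Proof.
have none : all (fun p1 => all (fun p2 => all (fun p3 =>
    p1.1 + p2.1 + 11 * p3.1 != 43)%N small_pentagonals) small_pentagonals)
    small_pentagonals by vm_compute.
case=> x; rewrite value_pentagonal_witness => hx.
have := Pm_ge0 5 (x 0%N) isT; have := Pm_ge0 5 (x 1%N) isT.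
have := Pm_ge0 5 (x 2%N) isT => g2 g1 g0.
have [p1 h1 e1] := small_pentagonals_complete (x 0%N) ltac:(lia).
have [p2 h2 e2] := small_pentagonals_complete (x 1%N) ltac:(lia).
have [p3 h3 e3] := small_pentagonals_complete (x 2%N) ltac:(lia).
have := allP (allP (allP none p1 h1) p2 h2) p3 h3.
move: hx; rewrite e1 e2 e3; move: (p1.1) (p2.1) (p3.1) => n1 n2 n3 hx /eqP; apply; lia.
Qed.

Lemma criterion_C_ge15 C : universality_criterion C -> (15 <= C)%N.
Proof.
move=> HC; rewrite leqNgt; apply/negP => hC.
apply: pentagonal_witness_misses_43; apply: (HC 5 isT) => //.
by move=> N hN; apply: pentagonal_witness_represents; lia.
Qed.

Lemma universal_of_block C m a k : universality_criterion C -> (4 <= m)%N ->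
  is_form a -> (2 <= k <= size a)%N ->
  (forall i, (2 <= i < k)%N -> nth 0%N a i = 3%N) -> (4 * C <= k - 2)%N ->
  (forall v, (v < 3 * (m - 3))%N -> represents m a v) -> universal m a.
Proof.
move=> HC hm hform hk threes hC hsmall; apply: HC => //; first by lia.
by move=> N /andP[_ hN]; apply: (represents_upto m a k hk threes C hm hC hsmall).
Qed.

(* The exceptional class is a single residue mod 3, so it is left by
   subtracting any b not divisible by 3. *)
Lemma exceptional_sub m a2 v b : exceptional m a2 v -> ~~ (3 %| b)%N -> (b <= v)%N ->
  ~~ exceptional m a2 (v - b).
Proof. by rewrite /exceptional /dvdn; lia. Qed.

Lemma escalation_bounds C m : (15 <= C)%N -> (6 * C ^ 2 * (C + 1) < m)%N ->
  let l := ((m - 2) %/ (C + 1))%N in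
  [/\ (7 <= m)%N, (4 * C <= (C - 4) * l + 3)%N & (2 * m + 10 <= 3 * ((C - 4) * l + 3))%N].
Proof.
move=> hC hm l.
have hl1 : (m - 2 < (l + 1) * (C + 1))%N.
  have := ltn_pmod (m - 2) (ltn0Sn C); rewrite -addn1.
  have := divn_eq (m - 2) (C + 1); rewrite -/l; nia.
have hl : (2 * C + 5 <= l)%N.
  rewrite leqNgt; apply/negP => hlt.
  have : ((l + 1) * (C + 1) <= (2 * C + 5) * (C + 1))%N by apply: leq_mul; lia.
  have : ((2 * C + 5) * (C + 1) + 2 <= 6 * C ^ 2 * (C + 1))%N by rewrite expnS expn1; nia.
  lia.
split; [nia | nia | nia].
Qed.

(* Part (2), key step: the parent F' of F = F' + b P_m(x_n) starts with 1, a_2 and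
   contains the whole block; an exceptional v above 3(k-2) is either below the
   truant t of F' (so represented by F') or is (v - b) + b with v - b
   non-exceptional, since b <= t and 3 does not divide b. *)
Lemma child_represents_below m a b k t : (7 <= m)%N -> escalator_node m a ->
  is_truant m a t -> represents m (rcons a b) t -> ~~ (3 %| b)%N ->
  (2 <= k <= size a)%N -> (forall i, (2 <= i < k)%N -> nth 0%N a i = 3%N) ->
  (2 * m + 10 <= 3 * (k - 2))%N ->
  forall v, (v < 3 * (m - 3))%N -> represents m (rcons a b) v.
Proof.
move=> hm hnode [ht0 hnt hbelow] hrep hb hk threes hlong v hv.
have hm4 : (4 <= m)%N by lia.
have hsize : (1 < size a)%N by case/andP: hk => h2 hka; lia.
have [head1 head2] := node_first_coefs m a hm hnode.
have head2' : (1 <= nth 0%N a 1 <= 2)%N.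
  rewrite head2 // andbT; have [hpos _] := node_is_form m a hnode.
  by apply: (allP hpos); apply: mem_nth.
have cover := represents_nonexceptional m a k hk threes (head1 (ltnW hsize)) head2' _ hm4 hlong.
have hbt := coef_le_truant m a b t hm4 hnt hrep.
have [/andP[hbig hexc]|hfine] := boolP ((3 * (k - 2) < v)%N && exceptional m (nth 0%N a 1) v).
- have [hvt|htv] := ltnP v t.
    apply: represents_rcons; have [->|v0] := posnP v; first exact: represents_0.
    by apply: hbelow; rewrite v0.
  rewrite -(subnK (leq_trans hbt htv)); apply/represents_rcons_add/cover; first by lia.
  by rewrite exceptional_sub ?orbT // (leq_trans hbt htv).
- apply/represents_rcons/cover; first by lia.
  by move: hfine; rewrite negb_and -leqNgt.
Qed.

Lemma universal_child_not_div3 C m a b k : universality_criterion C -> (7 <= m)%N ->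
  escalator_node m (rcons a b) -> ~~ (3 %| b)%N -> (2 <= k <= size (rcons a b))%N ->
  (forall i, (2 <= i < k)%N -> nth 0%N (rcons a b) i = 3%N) ->
  (4 * C <= k - 2)%N -> (2 * m + 10 <= 3 * (k - 2))%N -> universal m (rcons a b).
Proof.
move=> HC hm hnode hb hk threes hC hlong.
have [hparent _ [t ht hrep]] := node_parent m a b hnode.
have hka : (k <= size a)%N.
  have := hk; rewrite size_rcons => hk'.
  rewrite leqNgt; apply/negP => hlt; move: hb.
  have := threes (size a) ltac:(lia); rewrite nth_rcons ltnn eqxx => ->.
  by [].
have threes' i : (2 <= i < k)%N -> nth 0%N a i = 3%N.
  by move=> hi; rewrite -(threes i hi) nth_rcons ifT //; lia.
apply: (universal_of_block C m _ k HC _ (node_is_form m _ hnode) hk threes hC); first by lia.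
apply: (child_represents_below m a b k t hm hparent ht hrep hb _ threes' hlong).
by rewrite hka andbT; case/andP: hk.
Qed.

Theorem lemma4p17 (C : nat)
  (HC : forall m : nat, (3 <= m)%N -> forall a : seq nat, is_form a ->
          (forall N : nat, (1 <= N <= C * (m - 2))%N -> represents m a N) ->
          universal m a)
  (m : nat) (Hm : (6 * C ^ 2 * (C + 1) < m)%N)
  (a : seq nat) (Hnode : escalator_node m a)
  (Hn : (C%:Z - 4) * ((m - 2) %/ (C + 1))%N%:Z + 5 <= (size a)%:Z)
  (H3 : forall i : nat, (3 <= i)%N ->
          i%:Z <= (C%:Z - 4) * ((m - 2) %/ (C + 1))%N%:Z + 5 ->
          nth 0%N a i.-1 = 3%N) :
  ((3 * (m - 3) - 1 <= \sum_(i <- a) i)%N ->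
   (forall i : nat, (3 <= i <= size a)%N -> (3 %| nth 0%N a i.-1)%N) ->
   universal m a)
  /\
  (~~ (3 %| nth 0%N a (size a).-1)%N -> universal m a).
Proof.
have hC := criterion_C_ge15 C HC.
have [hm hlongC hlong] := escalation_bounds C m hC Hm.
move: Hn H3 hlongC hlong; set l := ((m - 2) %/ (C + 1))%N.
have -> : (C%:Z - 4) * l%:Z + 5 = ((C - 4) * l + 5)%N%:Z by rewrite PoszD PoszM; congr (_ * _ + _); lia.
set k := ((C - 4) * l + 5)%N => Hn H3 hlongC hlong.
have hk : (2 <= k <= size a)%N by apply/andP; split; lia.
have threes i : (2 <= i < k)%N -> nth 0%N a i = 3%N.
  by move=> hi; apply: (H3 i.+1); lia.
have hC' : (4 * C <= k - 2)%N by lia.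
split.
- move=> hsum _; apply: (universal_of_block C m a k HC _ (node_is_form m a Hnode) hk threes hC').
    by lia.
  by move=> v hv; apply: node_represents_le_sum => //; lia.
- case/lastP: a Hnode hk threes {Hn H3} => [|a' b] Hnode hk threes; first by move: hk => /=; lia.
  rewrite size_rcons /= nth_rcons ltnn eqxx => hb.
  by apply: (universal_child_not_div3 C m a' b k HC hm Hnode hb hk threes hC'); lia.
Qed.
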